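(* Let $h$ be an integer with $1\le h\le u$. Then $\beta$ is a root of $S(X)$ of multiplicity at least $2^h$ if and only if, for every $i\in\{0,1,\dots,2^h-1\}$, \[ \sum_{j=0}^{2^h-1}\zeta_{2^h}^{-ij}\,\eta_{j/2^h}(-1)\,K\big(\eta_{j/2^h}\chi\big)\equiv -2^h\delta_i \pmod{2^{h+1}\mathcal{P}\,\mathbb{Z}[\zeta_{2^hk}]}, \] where $\delta_i=1$ if $T/2\equiv i\pmod{2^h}$ and $\delta_i=0$ otherwise. Equivalently, $C\,v\equiv-2^h(\delta_0,\dots,\delta_{2^h-1})^{\top}$ componentwise, where $C=(\zeta_{2^h}^{-ij})_{0\le i,j\le 2^h-1}$ and $v=\big(\eta_{j/2^h}(-1)K(\eta_{j/2^h}\chi)\big)_{0\le j\le 2^h-1}$.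
   Context: Let $p$ be an odd prime, $m\ge1$, $q=p^m$, $\alpha$ a primitive element of $\mathbb{F}_q$, and $T=q-1$; write $T=2^uT'$ with $u\ge1$ and $T'$ odd. The binary SLCE sequence $(s_n)_{n\ge0}$ is defined as follows: $s_n=1$ if $\alpha^n+1$ is a nonzero non-square of $\mathbb{F}_q$, and $s_n=0$ otherwise. Put $S(X)=\sum_{n=0}^{T-1}s_nX^n\in\mathbb{F}_2[X]$. Multiplicities of roots are taken in $\overline{\mathbb{F}_2}[X]$. Let $\beta$ be an element of an algebraic closure of $\mathbb{F}_2$ with $\beta^T=1$ and multiplicative order $k>1$ (so $k$ is odd). Let $f$ be the order of $2$ modulo $k$, and write $\zeta_N=e^{2\pi i/N}$. Let $\mathcal{P}$ be a prime ideal of $\mathbb{Z}[\zeta_k]$ containing $2$. Fix a field isomorphism $\phi:\mathbb{F}_2(\beta)=\mathbb{F}_{2^f}\to\mathbb{Z}[\zeta_k]/\mathcal{P}$, and let $\zeta$ be the unique complex $k$-th root of unity with $\phi(\beta)=\zeta+\mathcal{P}$. Multiplicative characters of $\mathbb{F}_q$ are homomorphisms $\mathbb{F}_q^*\to\mathbb{C}^*$, extended by value $0$ at $0$. For a rational $j$ with $(q-1)j\in\mathbb{Z}$, $\eta_j$ is the character with $\eta_j(\alpha)=e^{2\pi ij}$. Let $\rho=\eta_{1/2}$ be the quadratic character. Let $\chi$ be the character with $\chi(\alpha^n)=\zeta^n$. For a character $\psi$, set $K(\psi)=\sum_{x\in\mathbb{F}_q}\rho(x)\psi(1-x)$. For an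 ideal $I$ of $\mathbb{Z}[\zeta_k]$, $I\,\mathbb{Z}[\zeta_{2^hk}]$ is the ideal it generates in $\mathbb{Z}[\zeta_{2^hk}]$. *)

From HB Require Import structures.
From mathcomp Require Import all_boot all_order all_algebra all_field.
Set Implicit Arguments. Unset Strict Implicit. Unset Printing Implicit Defensive.
Import Order.TTheory GRing.Theory Num.Theory.
Local Open Scope ring_scope.

(* zeta N = e^{2 pi i / N}: the square of N.-root (-1) = e^{i pi / N}
   (n.-root picks the root of minimal non-negative argument). *)
Definition zeta (N : nat) : algC := (N.-root (-1)) ^+ 2.

Definition inZzeta (N : nat) (x : algC) : Prop :=
  exists g : {poly int}, x = (map_poly intr g).[zeta N].

(* x = y modulo the ideal (2^(h+1) P) Z[zeta_(2^h k)], i.e. x - y is a finite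
   sum of terms 2^(h+1) * p * r with p in P and r in Z[zeta_(2^h k)]. *)
Definition congr_ideal (h k : nat) (P : pred algC) (x y : algC) : Prop :=
  exists s : seq (algC * algC),
    (forall pr, pr \in s -> pr.1 \in P /\ inZzeta (2 ^ h * k) pr.2) /\
    x - y = \sum_(pr <- s) (2 ^ (h + 1))%:R * pr.1 * pr.2.

Section FF.
Variable F : finFieldType.

Definition nonsquare (x : F) : bool := (x != 0) && ~~ [exists y : F, y ^+ 2 == x].

Definition dlog (a x : F) : nat := find (fun n => a ^+ n == x) (iota 0 #|F|.-1).

Definition charOf (a : F) (w : algC) (x : F) : algC :=
  if x == 0 then 0 else w ^+ dlog a x.

(* eta_{j/N}: the character with eta(a) = e^{2 pi i j / N} *)
Definition etaC (a : F) (N j : nat) : F -> algC := charOf a (zeta N ^+ j).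

Definition Ksum (a : F) (psi : F -> algC) : algC :=
  \sum_(x : F) etaC a 2 1 x * psi (1 - x).

Definition slce (a : F) (n : nat) : bool := nonsquare (a ^+ n + 1).

Definition Spoly (a : F) (E : fieldType) : {poly E} :=
  \poly_(n < #|F|.-1) (if slce a n then 1 else 0).
End FF.

(* Write rho for the quadratic character and psi_j = eta_(j/2^h).  Since chi(-1) = 1,
   psi_j(-1) K(psi_j chi) = sum_m rho(alpha^m + 1) zeta_(2^h)^(jm) z^m, so the discrete
   Fourier transform in j isolates the residue class m = i mod 2^h; as
   2 s_m = 1 - rho(alpha^m + 1) - [alpha^m = -1], the i-th Fourier sum equals
   -2^h delta_i - 2^(h+1) X_i(z), where X_i(x) = sum_(m = i mod 2^h, s_m = 1) x^m.
   In characteristic 2, (X - beta)^(2^h) = X^(2^h) - beta^(2^h), which divides S(X) iff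
   every X_i(beta) vanishes, i.e. iff every X_i(z) lies in P.  Finally X_i(z) is in P iff
   2^(h+1) X_i(z) is in 2^(h+1) P Z[zeta_(2^h k)]: averaging over the automorphisms of
   Q(zeta_(2^h k)) fixing Q(zeta_k) fixes X_i(z) and P and maps Z[zeta_(2^h k)] into
   Z[zeta_k], because a root of unity of 2-power order other than +-1 averages to 0. *)

From HB Require Import structures.
From mathcomp Require Import all_boot all_order all_algebra all_field.
From mathcomp Require Import zify ring.
Set Implicit Arguments. Unset Strict Implicit. Unset Printing Implicit Defensive.
Import Order.TTheory GRing.Theory Num.Theory.
Local Open Scope ring_scope.

Lemma zeta_expr_order N : (0 < N)%N -> zeta N ^+ N = 1.
Proof. by move=> N_gt0; rewrite /zeta -exprM mulnC exprM rootCK // sqrrN expr1n. Qed.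

Lemma zeta2 : zeta 2 = -1.
Proof. by rewrite /zeta rootCK. Qed.

Lemma zeta_pow2_prim h : (0 < h)%N -> (2 ^ h).-primitive_root (zeta (2 ^ h)).
Proof.
move=> h_gt0; have h2_gt0 := expn_gt0 2 h.
have [d d_prim] := prim_order_exists h2_gt0 (zeta_expr_order h2_gt0).
case/(dvdn_pfactor _ _ (isT : prime 2)) => t t_le_h dE; rewrite dE in d_prim.
have [t_lt_h|t_ge_h] := ltnP t h; last first.
  have tE : t = h by apply/anti_leq; rewrite t_le_h.
  by rewrite tE in d_prim.
have : zeta (2 ^ h) ^+ (2 ^ h.-1) == 1.
  by rewrite -(prim_order_dvd d_prim) dvdn_exp2l // -ltnS prednK.
rewrite /zeta -exprM -expnS prednK // rootCK // -subr_eq0 -opprD oppr_eq0.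
by rewrite -(natrD _ 1 1) pnatr_eq0.
Qed.

Lemma prim_root_expr_half (R : nzRingType) (x : R) k T :
  k.-primitive_root x -> odd k -> (k %| T)%N -> ~~ odd T -> x ^+ T./2 = 1.
Proof.
move=> x_prim k_odd k_dvd_T T_even; apply/eqP.
by rewrite -(prim_order_dvd x_prim) -(@Gauss_dvdr _ 2) ?coprimen2 // mul2n even_halfK.
Qed.

Lemma prim_root_expr_pow2_neq1 (R : nzRingType) (x : R) k h :
  k.-primitive_root x -> odd k -> (1 < k)%N -> x ^+ (2 ^ h) != 1.
Proof.
move=> x_prim k_odd k_gt1; rewrite -(prim_order_dvd x_prim).
apply: contraTN k_gt1 => /coprime_dvdr/(_ (coprimeXr h (_ : coprime k 2))).
by rewrite coprimen2 /coprime gcdnn => /(_ k_odd)/eqP ->.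
Qed.

Section CyclicCharacters.
Variables (F : finFieldType) (a : F).
Local Notation T := #|F|.-1.
Hypothesis a_prim : T.-primitive_root a.

Let T_gt0 : (0 < T)%N := prim_order_gt0 a_prim.

Lemma prim_root_neq0 : a != 0.
Proof. by rewrite (prim_root_eq0 a_prim) -lt0n. Qed.

Lemma expf_card_pred (x : F) : x != 0 -> x ^+ T = 1.
Proof.
move=> x0; apply: (mulfI x0); rewrite -exprS prednK ?expf_card ?mulr1 //.
exact: ltnW (card_finNzRing_gt1 F).
Qed.

Lemma dlogP (x : F) : x != 0 -> a ^+ dlog a x = x /\ (dlog a x < T)%N.
Proof.
move=> x0; have [i ->] := prim_rootP a_prim (expf_card_pred x0).
have hs : has (fun n => a ^+ n == a ^+ i) (iota 0 T).
  by apply/hasP; exists (val i); rewrite // mem_iota /=.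
have := nth_find 0 hs; rewrite has_find size_iota in hs.
by rewrite /dlog nth_iota //= add0n => /eqP.
Qed.

Lemma dlog_exp m : (m < T)%N -> dlog a (a ^+ m) = m.
Proof.
move=> mT; have [aE dlog_lt] := dlogP (expf_neq0 m prim_root_neq0).
by apply/eqP; move/eqP: aE; rewrite (eq_prim_root_expr a_prim) !modn_small.
Qed.

Lemma charOf_exp (w : algC) m : w ^+ T = 1 -> charOf a w (a ^+ m) = w ^+ m.
Proof.
move=> wT; rewrite /charOf (negbTE (expf_neq0 m prim_root_neq0)).
have [/eqP aE _] := dlogP (expf_neq0 m prim_root_neq0).
by move: aE; rewrite (eq_prim_root_expr a_prim) -(expr_mod _ wT) => /eqP ->; rewrite expr_mod.
Qed.

Lemma charOf0 (w : algC) : charOf a w 0 = 0.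
Proof. by rewrite /charOf eqxx. Qed.

Lemma charOfM (w : algC) x y : w ^+ T = 1 ->
  charOf a w (x * y) = charOf a w x * charOf a w y.
Proof.
move=> wT; have [->|x0] := eqVneq x 0; first by rewrite mul0r charOf0 mul0r.
have [->|y0] := eqVneq y 0; first by rewrite mulr0 charOf0 mulr0.
have [[<- _] [<- _]] := (dlogP x0, dlogP y0).
by rewrite -exprD !charOf_exp // exprD.
Qed.

Lemma sum_finField_exp (f : F -> algC) :
  \sum_(x : F) f x = f 0 + \sum_(m < T) f (a ^+ m).
Proof.
rewrite (bigD1 0) //=; congr (_ + _).
rewrite (reindex_onto (fun m : 'I_T => a ^+ m)
                      (fun x => insubd (Ordinal T_gt0) (dlog a x))) /=.
  apply: eq_bigl => m; rewrite expf_neq0 ?prim_root_neq0 //= dlog_exp //.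
  by apply/eqP/val_inj; rewrite val_insubd /= ltn_ord.
by move=> x x0; have [aE dlog_lt] := dlogP x0; rewrite val_insubd dlog_lt.
Qed.

Hypothesis T_even : ~~ odd T.

Lemma half_order_lt : (T./2 < T)%N.
Proof. by move: T_gt0 (even_halfK T_even); rewrite -addnn; lia. Qed.

Lemma expr_half_order : a ^+ T./2 = -1.
Proof.
have : (a ^+ T./2) ^+ 2 == 1.
  by rewrite -exprM muln2 (even_halfK T_even) (prim_expr_order a_prim).
rewrite sqrf_eq1 -(prim_order_dvd a_prim) => /orP[/dvdn_leq|/eqP //].
by move: T_gt0 (even_halfK T_even); rewrite -addnn; case: T./2 => [|t] //; lia.
Qed.

Lemma expr_add1_eq0 m : (m < T)%N -> (a ^+ m + 1 == 0) = (m == T./2).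
Proof.
move=> mT; rewrite addr_eq0 -expr_half_order (eq_prim_root_expr a_prim).
by rewrite !modn_small ?half_order_lt.
Qed.

Lemma square_dlog (y : F) : y != 0 -> [exists x, x ^+ 2 == y] = ~~ odd (dlog a y).
Proof.
move=> y0; have [yE _] := dlogP y0.
apply/existsP/idP => [[x /eqP xy]|ev]; last first.
  exists (a ^+ (dlog a y)./2); rewrite -exprM muln2 -[in X in _ == X]yE.
  by rewrite -[X in _ == a ^+ X](odd_double_half (dlog a y)) (negbTE ev).
have x0 : x != 0 by apply: contraNneq y0 => x0; rewrite -xy x0 expr0n.
have [xE _] := dlogP x0.
have : a ^+ (dlog a x * 2) == a ^+ dlog a y by rewrite exprM xE yE xy.
rewrite (eq_prim_root_expr a_prim) => /eqP/(congr1 (modn^~ 2)).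
by rewrite !modn_dvdm ?dvdn2 // modnMl modn2; case: (odd _).
Qed.

Lemma nonsquare_quadratic (y : F) :
  2 * (nonsquare y : nat)%:R = 1 - etaC a 2 1 y - (y == 0 : nat)%:R :> algC.
Proof.
rewrite /nonsquare /etaC /charOf expr1 zeta2.
have [->|y0] := eqVneq y 0; first by rewrite /= mulr0 subr0 subrr.
rewrite /= square_dlog // negbK subr0 -signr_odd.
by case: (odd _); rewrite /= ?expr0 ?expr1 ?opprK ?mulr0 ?mulr1 ?subrr.
Qed.

End CyclicCharacters.

Lemma geom_sum_unity_root (R : idomainType) (x : R) m :
  x != 1 -> x ^+ m = 1 -> \sum_(j < m) x ^+ j = 0.
Proof.
move=> x1 xm; apply/eqP; have := subrX1 x m; rewrite xm subrr => /esym/eqP.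
by rewrite mulf_eq0 subr_eq0 (negbTE x1).
Qed.

Lemma dvdn_subnDl_mod n i m : (i < n)%N -> (n %| n - i + m)%N = (m %% n == i)%N.
Proof.
move=> i_lt_n; rewrite /dvdn -[0%N](mod0n n) -(eqn_modDr i) add0n addnAC.
by rewrite subnK ?(ltnW i_lt_n) // modnDl (modn_small i_lt_n).
Qed.

Section ResidueFilter.
Variables (R : fieldType) (n : nat) (w : R).
Hypothesis w_prim : n.-primitive_root w.

Lemma sum_prim_root_expr e : \sum_(j < n) (w ^+ e) ^+ j = (n %| e)%N%:R * n%:R.
Proof.
rewrite (prim_order_dvd w_prim); have [->|we] := eqVneq (w ^+ e) 1.
  by under eq_bigr do rewrite expr1n; rewrite sumr_const card_ord mul1r.
rewrite mul0r geom_sum_unity_root //.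
by rewrite exprAC (prim_expr_order w_prim) expr1n.
Qed.

Lemma sum_residue_filter T i (f : nat -> R) : (i < n)%N ->
  \sum_(j < n) w ^- (i * j) * \sum_(m < T) (w ^+ j) ^+ m * f m
  = n%:R * \sum_(m < T | (m %% n == i)%N) f m.
Proof.
move=> i_lt_n; have w_neq0 : w != 0.
  by rewrite (prim_root_eq0 w_prim) -lt0n (prim_order_gt0 w_prim).
under eq_bigr do rewrite mulr_sumr.
rewrite exchange_big mulr_sumr [RHS]big_mkcond; apply: eq_bigr => m _ /=.
have wN j : w ^- (i * j) = w ^+ ((n - i) * j).
  apply: (mulIf (expf_neq0 (i * j) w_neq0)); rewrite mulVf ?expf_neq0 //.
  by rewrite -exprD -mulnDl subnK ?(ltnW i_lt_n) // exprM (prim_expr_order w_prim) expr1n.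
have wE j : w ^- (i * j) * (w ^+ j) ^+ m = (w ^+ (n - i + m)) ^+ j.
  by rewrite wN -exprM -exprD -exprM mulnDl (mulnC j m).
under eq_bigr do rewrite mulrA wE.
rewrite -mulr_suml sum_prim_root_expr dvdn_subnDl_mod //.
by case: (_ == i); rewrite ?mul0r ?mulr0 ?mul1r.
Qed.

End ResidueFilter.

Definition resid_sum (R : pzRingType) (T n i : nat) (s : nat -> bool) (x : R) : R :=
  \sum_(m < T | (m %% n == i)%N && s m) x ^+ m.

Lemma resid_sumE (R : pzRingType) T n i s (x : R) :
  resid_sum T n i s x = \sum_(m < T | (m %% n == i)%N) (if s m then 1 else 0) * x ^+ m.
Proof.
by rewrite /resid_sum big_mkcondr; apply: eq_bigr => m _; case: (s m); rewrite ?mul1r ?mul0r.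
Qed.

Section FourierKsum.
Variables (F : finFieldType) (a : F).
Local Notation T := #|F|.-1.
Hypotheses (a_prim : T.-primitive_root a) (T_even : ~~ odd T).
Variables (n : nat) (z : algC).
Hypotheses (n_dvd_T : (n %| T)%N) (w_prim : n.-primitive_root (zeta n)).
Hypotheses (zT : z ^+ T = 1) (z_half : z ^+ T./2 = 1) (zn : z ^+ n != 1).
Local Notation w := (zeta n).
Local Notation rho := (etaC a 2 1).

Let expr_zeta_order j : (w ^+ j) ^+ T = 1.
Proof.
by move: n_dvd_T; rewrite (prim_order_dvd w_prim) -exprM mulnC exprM => /eqP ->; rewrite expr1n.
Qed.

(* chi(-1) = 1 turns psi(-1) psi(1 - x) chi(1 - x) into (psi chi)(x - 1); then x = a^m + 1. *)
Lemma Ksum_expand j :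
  etaC a n j (-1) * Ksum a (fun x => etaC a n j x * charOf a z x)
  = \sum_(m < T) (w ^+ j) ^+ m * (rho (a ^+ m + 1) * z ^+ m).
Proof.
rewrite /Ksum /etaC mulr_sumr; set c := charOf a (w ^+ j); set cz := charOf a z.
have cz_N1 : cz (-1) = 1 by rewrite /cz -(expr_half_order a_prim) // charOf_exp.
have flip x : c (-1) * (rho x * (c (1 - x) * cz (1 - x))) = rho x * (c (x - 1) * cz (x - 1)).
  have -> : x - 1 = -1 * (1 - x) by rewrite mulN1r opprB.
  rewrite /c /cz (charOfM a_prim _ _ (expr_zeta_order j)) (charOfM a_prim _ _ zT).
  by rewrite -/cz cz_N1 mul1r mulrCA !mulrA.
under eq_bigr do rewrite flip.
rewrite (reindex_inj (addIr 1)) /= (sum_finField_exp a_prim) addrK add0r.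
rewrite /c charOf0 mul0r mulr0 add0r; apply: eq_bigr => m _.
by rewrite /cz addrK (charOf_exp a_prim _ (expr_zeta_order j)) (charOf_exp a_prim _ zT) mulrCA.
Qed.

Lemma sum_residue_class i : (i < n)%N -> \sum_(m < T | (m %% n == i)%N) z ^+ m = 0.
Proof.
move=> i_lt_n; apply: (mulfI (_ : n%:R != 0 :> algC)).
  by rewrite pnatr_eq0 -lt0n (prim_order_gt0 w_prim).
rewrite mulr0 -(sum_residue_filter w_prim _ (fun m => z ^+ m)) // big1 // => j _.
under eq_bigr do rewrite -exprMn.
rewrite geom_sum_unity_root ?mulr0 //; last by rewrite exprMn expr_zeta_order zT mulr1.
apply: contra zn => /eqP wz; have : (w ^+ j * z) ^+ n == 1 by rewrite wz expr1n.
by rewrite exprMn exprAC (prim_expr_order w_prim) expr1n mul1r.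
Qed.

Lemma double_resid_sum_slce i : (i < n)%N ->
  2 * resid_sum T n i (slce a) z
  = - \sum_(m < T | (m %% n == i)%N) rho (a ^+ m + 1) * z ^+ m
    - ((T./2 %% n == i)%N : nat)%:R.
Proof.
move=> i_lt_n; have half_lt := half_order_lt a_prim T_even.
have half_term : \sum_(m < T | (m %% n == i)%N) (a ^+ m + 1 == 0 : nat)%:R * z ^+ m
    = ((T./2 %% n == i)%N : nat)%:R.
  rewrite big_mkcond (bigD1 (Ordinal half_lt)) //= big1 ?addr0.
    by rewrite (expr_add1_eq0 a_prim) // eqxx z_half mulr1; case: ifP.
  move=> m /eqP m_neq; rewrite (expr_add1_eq0 a_prim) //.
  have -> : (m == T./2 :> nat) = false by apply/eqP => mE; apply: m_neq; apply: val_inj.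
  by rewrite mul0r; case: ifP.
rewrite -[RHS]add0r -{1}(sum_residue_class i_lt_n) -half_term.
rewrite /resid_sum big_mkcondr mulr_sumr -sumrN -sumrB -big_split; apply: eq_bigr => m _.
have -> : (if slce a m then z ^+ m else 0) = (slce a m : nat)%:R * z ^+ m.
  by case: (slce a m); rewrite ?mul1r ?mul0r.
by rewrite mulrA (nonsquare_quadratic a_prim T_even) /=; ring.
Qed.

Lemma Fourier_Ksum i : (i < n)%N ->
  \sum_(j < n) w ^- (i * j) * etaC a n j (-1)
      * Ksum a (fun x => etaC a n j x * charOf a z x)
  = - n%:R * ((T./2 %% n == i)%N : nat)%:R - (2 * n)%N%:R * resid_sum T n i (slce a) z.
Proof.
move=> i_lt_n.
under eq_bigr do rewrite -mulrA Ksum_expand.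
rewrite (sum_residue_filter w_prim _ (fun m => rho (a ^+ m + 1) * z ^+ m)) //.
move: (double_resid_sum_slce i_lt_n).
set X := resid_sum _ _ _ _ _; set S := \sum_(m < T | _) _.
set d := ((T./2 %% n == i)%N : nat)%:R => XE.
have -> : S = - (2 * X) - d by rewrite XE; ring.
by rewrite natrM; ring.
Qed.

End FourierKsum.

Lemma exp2n_subr_pchar2 (R : comNzRingType) (x y : R) h : 2 \in [pchar R] ->
  (x - y) ^+ (2 ^ h) = x ^+ (2 ^ h) - y ^+ (2 ^ h).
Proof.
move=> pchar2; have pchar2_exp : [pchar R].-nat (2 ^ h)%N.
  by rewrite (eq_pnat _ (pcharf_eq pchar2)) pnatX pnat_id.
by rewrite exprDn_pchar // exprNn_pchar.
Qed.

Section DvdpXnsubC.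
Variables (E : fieldType) (beta : E) (n T : nat) (c : nat -> E).
Hypotheses (beta_neq0 : beta != 0) (n_gt0 : (0 < n)%N).
Local Notation b := (beta ^+ n).

Lemma poly_fold_XnsubC :
  \poly_(i < n) \sum_(m < T | (m %% n == i)%N) c m * b ^+ (m %/ n)
  = \sum_(m < T) (c m * b ^+ (m %/ n)) *: 'X^(m %% n).
Proof.
apply/polyP => i; rewrite coef_poly coef_sum.
case: ltnP => [i_lt_n|i_ge_n].
  rewrite big_mkcond; apply: eq_bigr => m _; rewrite coefZ coefXn eq_sym.
  by case: (i == _); rewrite ?mulr1 ?mulr0.
rewrite big1 // => m _; rewrite coefZ coefXn.
suff /negbTE-> : i != (m %% n)%N by rewrite mulr0.
by apply: contraTneq i_ge_n => ->; rewrite -ltnNge ltn_pmod.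
Qed.

Lemma dvdp_XnsubC_fold :
  'X^n - b%:P %| \poly_(m < T) c m
    - \poly_(i < n) \sum_(m < T | (m %% n == i)%N) c m * b ^+ (m %/ n).
Proof.
rewrite poly_fold_XnsubC poly_def -sumrB.
apply: (big_ind (fun q => _ %| q)) => [|p q|m _]; [exact: dvdp0 | exact: dvdp_add |].
have -> : c m *: 'X^m - (c m * b ^+ (m %/ n)) *: 'X^(m %% n)
    = c m *: (('X^n ^+ (m %/ n) - b%:P ^+ (m %/ n)) * 'X^(m %% n)).
  apply: esym; rewrite mulrBl -exprM -exprD mulnC -divn_eq -polyC_exp mul_polyC.
  by rewrite scalerBr scalerA.
by rewrite -mul_polyC dvdp_mull // dvdp_mulr // subrXX dvdp_mulIl.
Qed.

Lemma dvdp_XnsubC_poly :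
  ('X^n - b%:P %| \poly_(m < T) c m) <->
  forall i, (i < n)%N -> \sum_(m < T | (m %% n == i)%N) c m * beta ^+ m = 0.
Proof.
pose r := \poly_(i < n) \sum_(m < T | (m %% n == i)%N) c m * b ^+ (m %/ n).
have -> : ('X^n - b%:P %| \poly_(m < T) c m) = ('X^n - b%:P %| r).
  by rewrite -[in LHS](subrK r (\poly_(m < T) c m)) dvdp_addr // dvdp_XnsubC_fold.
have r0E : ('X^n - b%:P %| r) = (r == 0).
  apply/idP/eqP => [dvd_r|->]; last exact: dvdp0.
  apply/eqP; apply: contraTT dvd_r => r_neq0; apply/negP => /(dvdp_leq r_neq0).
  by rewrite size_XnsubC // ltnNge size_poly.
have betaE i : (i < n)%N -> \sum_(m < T | (m %% n == i)%N) c m * beta ^+ m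
    = beta ^+ i * \sum_(m < T | (m %% n == i)%N) c m * b ^+ (m %/ n).
  move=> _; rewrite mulr_sumr; apply: eq_bigr => m /eqP <-.
  by rewrite mulrCA -exprM -exprD mulnC addnC -divn_eq.
rewrite r0E; split => [/eqP r0 i i_lt_n|r0].
  move: (congr1 (fun q : {poly E} => q`_i) r0); rewrite coef_poly i_lt_n coef0.
  by rewrite betaE // => ->; rewrite mulr0.
apply/eqP/polyP => i; rewrite coef_poly coef0; case: ltnP => // i_lt_n.
by apply/(mulfI (expf_neq0 i beta_neq0)); rewrite -betaE // r0 // mulr0.
Qed.

End DvdpXnsubC.

(* [inZzeta N] is convertible to [in_Zadj (zeta N)]. *)
Definition in_Zadj (z x : algC) : Prop := exists g : {poly int}, x = (map_poly intr g).[z].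

Section IntegralAdjunction.
Variable z : algC.

Lemma in_Zadj_int (m : int) : in_Zadj z m%:~R.
Proof. by exists m%:P; rewrite map_polyC hornerC. Qed.

Lemma in_Zadj_exp i : in_Zadj z (z ^+ i).
Proof. by exists 'X^i; rewrite map_polyXn hornerXn. Qed.

Lemma in_ZadjD x y : in_Zadj z x -> in_Zadj z y -> in_Zadj z (x + y).
Proof. by move=> [f ->] [g ->]; exists (f + g); rewrite rmorphD hornerD. Qed.

Lemma in_ZadjM x y : in_Zadj z x -> in_Zadj z y -> in_Zadj z (x * y).
Proof. by move=> [f ->] [g ->]; exists (f * g); rewrite rmorphM hornerM. Qed.

Lemma in_Zadj_sum (I : Type) (r : seq I) (P : pred I) (f : I -> algC) :
  (forall i, in_Zadj z (f i)) -> in_Zadj z (\sum_(i <- r | P i) f i).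
Proof. by move=> Zf; apply: big_ind => //; [exact: (in_Zadj_int 0) | exact: in_ZadjD]. Qed.

Lemma in_Zadj_trans y x : in_Zadj z y -> in_Zadj y x -> in_Zadj z x.
Proof.
move=> [g ->] [f ->]; exists (f \Po g).
by rewrite map_comp_poly horner_comp.
Qed.

Lemma in_Zadj_zeta_prim k x : k.-primitive_root z -> in_Zadj (zeta k) x -> in_Zadj z x.
Proof.
move=> z_prim; apply: in_Zadj_trans.
by have [i ->] := prim_rootP z_prim (zeta_expr_order (prim_order_gt0 z_prim)); exact: in_Zadj_exp.
Qed.

End IntegralAdjunction.

Lemma expr_coprime_split (R : pzRingType) (x : R) m1 m2 : coprime m1 m2 ->
  x ^+ (m1 * m2) = 1 -> exists y w, [/\ y ^+ m1 = 1, w ^+ m2 = 1 & x = y * w].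
Proof.
move=> co_m xM; pose e1 := chinese m1 m2 1 0; pose e2 := chinese m1 m2 0 1.
have xM_dvd e : (m1 * m2 %| e)%N -> x ^+ e = 1.
  by case/dvdnP => q ->; rewrite mulnC exprM xM expr1n.
exists (x ^+ e1), (x ^+ e2); split; rewrite -?exprM.
- apply: xM_dvd; rewrite mulnC dvdn_mul //.
  by rewrite /dvdn /e1 (chinese_modr co_m) mod0n.
- apply: xM_dvd; rewrite dvdn_mul //.
  by rewrite /dvdn /e2 (chinese_modl co_m) mod0n.
have e12 : (e1 + e2 == 1 %[mod m1 * m2])%N.
  rewrite (chinese_remainder co_m) -!(modnDm e1) /e1 /e2.
  by rewrite !(chinese_modl co_m) !(chinese_modr co_m) !modnDm addn0 add0n !eqxx.
by rewrite -exprD -(expr_mod _ xM) (eqP e12) expr_mod.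
Qed.

Section GaloisMean.
Variables (h k : nat) (z : algC).
Hypotheses (h_gt0 : (0 < h)%N) (k_odd : odd k) (z_prim : k.-primitive_root z).
Local Notation N := (2 ^ h * k)%N.

Let coprime_2h_k : coprime (2 ^ h) k.
Proof. by rewrite coprime_pexpl // coprime2n. Qed.

(* For s < 2^(h-1), x |-> x^(galois_exp s) runs through the automorphisms of Q(zeta_N)
   fixing Q(zeta_k): it raises 2^h-th roots of unity to the odd power 2s+1. *)
Definition galois_exp s := chinese (2 ^ h) k s.*2.+1 1.

Lemma coprime_galois_exp s : coprime (galois_exp s) N.
Proof.
rewrite coprimeMr -!(coprime_modl (galois_exp s)) /galois_exp.
rewrite (chinese_modl coprime_2h_k) (chinese_modr coprime_2h_k) !coprime_modl coprime1n andbT.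
by rewrite coprime_pexpr // coprimen2 /= odd_double.
Qed.

Definition galois_aut s : {rmorphism algC -> algC} :=
  sval (Qn_aut_exists (coprime_galois_exp s)).

Lemma galois_autE s x : x ^+ N = 1 -> galois_aut s x = x ^+ galois_exp s.
Proof. exact: (svalP (Qn_aut_exists (coprime_galois_exp s)) x). Qed.

Lemma galois_aut_pow2 s w : w ^+ (2 ^ h) = 1 -> galois_aut s w = w ^+ s.*2.+1.
Proof.
move=> w2h; rewrite galois_autE ?exprM ?w2h ?expr1n //.
by rewrite -(expr_mod _ w2h) (chinese_modl coprime_2h_k) expr_mod.
Qed.

Lemma galois_aut_Zadj s x : in_Zadj z x -> galois_aut s x = x.
Proof.
have zk := prim_expr_order z_prim.
have fix_z : galois_aut s z = z.
  rewrite galois_autE; last by rewrite mulnC exprM zk expr1n.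
  by rewrite -(expr_mod _ zk) (chinese_modr coprime_2h_k) expr_mod.
case=> g ->; rewrite -horner_map /= fix_z -map_poly_comp.
by congr (_.[_]); apply: eq_map_poly => m /=; rewrite rmorph_int.
Qed.

Definition galois_mean x := (2 ^ h.-1)%N%:R^-1 * \sum_(s < 2 ^ h.-1) galois_aut s x.

Lemma galois_mean_Zadj x : in_Zadj z x -> galois_mean x = x.
Proof.
move=> Zx; rewrite /galois_mean (eq_bigr (fun=> x)) => [|s _]; last exact: galois_aut_Zadj.
by rewrite sumr_const card_ord -[x *+ _]mulr_natl mulKf // pnatr_eq0 expn_eq0.
Qed.

Lemma galois_mean_sumM (I : eqType) (r : seq I) (p q : I -> algC) :
  (forall i, i \in r -> in_Zadj z (p i)) ->
  galois_mean (\sum_(i <- r) p i * q i) = \sum_(i <- r) p i * galois_mean (q i).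
Proof.
move=> Zp; rewrite /galois_mean; under eq_bigr do rewrite rmorph_sum.
rewrite exchange_big mulr_sumr !big_seq; apply: eq_bigr => i /Zp Zpi.
under eq_bigr do rewrite rmorphM galois_aut_Zadj //.
by rewrite -mulr_sumr mulrCA.
Qed.

(* With x = y w, y^(2^h) = 1, w^k = 1, the mean is w y times the average of y^(2s);
   that average is 1 if y = +-1 and 0 otherwise. *)
Lemma galois_mean_root_unity x : x ^+ N = 1 -> in_Zadj z (galois_mean x).
Proof.
move=> xN; have [y [w [y2h wk ->]]] := expr_coprime_split coprime_2h_k xN.
have mean_yw : galois_mean (y * w)
    = (2 ^ h.-1)%N%:R^-1 * (w * y * \sum_(s < 2 ^ h.-1) (y ^+ 2) ^+ s).
  rewrite /galois_mean; congr (_ * _); rewrite mulr_sumr; apply: eq_bigr => s _.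
  rewrite rmorphM galois_aut_pow2 // galois_aut_Zadj; last first.
    by have [i ->] := prim_rootP z_prim wk; exact: in_Zadj_exp.
  by rewrite exprS -mul2n exprM mulrC mulrA.
have [y21|y2_neq1] := eqVneq (y ^+ 2) 1.
  rewrite mean_yw y21; under eq_bigr do rewrite expr1n.
  rewrite sumr_const card_ord mulrC mulfK ?pnatr_eq0 ?expn_eq0 //.
  have [i ->] := prim_rootP z_prim wk; apply: in_ZadjM; first exact: in_Zadj_exp.
  move/eqP: y21; rewrite sqrf_eq1 => /orP[] /eqP ->; first exact: (in_Zadj_int z 1).
  exact: (in_Zadj_int z (-1)).
rewrite mean_yw geom_sum_unity_root // ?mulr0; first exact: (in_Zadj_int z 0).
by rewrite -exprM -expnS prednK.
Qed.

Lemma galois_mean_Zzeta r : in_Zadj (zeta N) r -> in_Zadj z (galois_mean r).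
Proof.
have N_gt0 : (0 < N)%N by rewrite muln_gt0 expn_gt0 (prim_order_gt0 z_prim).
have zetaN := zeta_expr_order N_gt0.
case=> g ->; rewrite horner_coef galois_mean_sumM => [|i _]; last first.
  by rewrite coef_map; exact: in_Zadj_int.
apply: in_Zadj_sum => i; apply: in_ZadjM; first by rewrite coef_map; exact: in_Zadj_int.
by apply: galois_mean_root_unity; rewrite exprAC zetaN expr1n.
Qed.

End GaloisMean.

Section Reduction.
Variables (E : fieldType) (beta : E) (z : algC) (P : pred algC).
Hypothesis memP : forall g : {poly int},
  ((map_poly intr g).[z] \in P) = root (map_poly intr g) beta.

Lemma reduction_ideal0 : 0 \in P.
Proof. by have := memP 0; rewrite !rmorph0 horner0 root0. Qed.

Lemma reduction_prim_root k : k.-primitive_root beta -> z ^+ k = 1 -> k.-primitive_root z.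
Proof.
move=> beta_prim zk; have k_gt0 := prim_order_gt0 beta_prim.
have [d z_prim d_dvd_k] := prim_order_exists k_gt0 zk.
suff -> : k = d by [].
apply/eqP; rewrite eqn_leq (dvdn_leq k_gt0 d_dvd_k) andbT.
apply: dvdn_leq (prim_order_gt0 z_prim) _; rewrite (prim_order_dvd beta_prim).
have := memP ('X^d - 1); rewrite !rmorphB /= !map_polyXn !rmorph1 /root !hornerE.
by rewrite (prim_expr_order z_prim) subrr reduction_ideal0 subr_eq0 => /esym.
Qed.

Hypothesis P_Zadj : forall x, x \in P -> in_Zadj z x.

Lemma reduction_idealD x y : x \in P -> y \in P -> x + y \in P.
Proof.
move=> xP yP; have [[f xE] [g yE]] := (P_Zadj xP, P_Zadj yP).
move: xP yP; rewrite xE yE !memP -hornerD -rmorphD memP => /rootP fb /rootP gb.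
by rewrite rmorphD /root hornerD fb gb addr0.
Qed.

Lemma reduction_idealM x y : x \in P -> in_Zadj z y -> x * y \in P.
Proof.
move=> xP [g yE]; have [f xE] := P_Zadj xP.
move: xP; rewrite xE yE !memP -hornerM -rmorphM memP => /rootP fb.
by rewrite rmorphM /root hornerM fb mul0r.
Qed.

Lemma reduction_ideal_sum (I : eqType) (r : seq I) (f : I -> algC) :
  (forall i, i \in r -> f i \in P) -> \sum_(i <- r) f i \in P.
Proof.
move=> fP; rewrite big_seq; apply: (big_ind (fun x => x \in P)) => //.
  exact: reduction_ideal0.
exact: reduction_idealD.
Qed.

Lemma resid_sum_reduction T n i s :
  (resid_sum T n i s z \in P) = (resid_sum T n i s beta == 0).
Proof.
pose g : {poly int} := \poly_(m < T) ((m %% n == i)%N && s m)%:R.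
have gE (R : nzRingType) (x : R) : (map_poly intr g).[x] = resid_sum T n i s x.
  rewrite (@horner_coef_wide _ T); last first.
    by rewrite /map_poly (leq_trans (size_poly _ _)) // size_poly.
  rewrite /resid_sum [RHS]big_mkcond; apply: eq_bigr => m _.
  by rewrite coef_map coef_poly ltn_ord /= rmorph_nat; case: (_ && _); rewrite ?mul1r ?mul0r.
by rewrite -!gE memP.
Qed.

(* Backwards: apply galois_mean to -X = sum p r; it fixes -X and each p, and sends each r
   into Z[z]. *)
Lemma congr_ideal_reduction h k c X :
  (0 < h)%N -> odd k -> k.-primitive_root z -> in_Zadj z X ->
  congr_ideal h k P (c - (2 ^ h.+1)%N%:R * X) c <-> X \in P.
Proof.
move=> h_gt0 k_odd z_prim ZX; have two_pow : (2 ^ (h + 1))%:R = (2 ^ h.+1)%N%:R :> algC.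
  by rewrite addn1.
split => [[r [r_in rE]]|XP]; last first.
  exists [:: (X, -1)]; split => [pr|]; last by rewrite big_seq1 /= two_pow; ring.
  by rewrite inE => /eqP -> /=; split => //; exact: (in_Zadj_int _ (-1)).
have NXE : - X = \sum_(pr <- r) pr.1 * pr.2.
  apply: (mulfI (_ : (2 ^ h.+1)%N%:R != 0 :> algC)); first by rewrite pnatr_eq0 expn_eq0.
  rewrite mulr_sumr; under eq_bigr do rewrite mulrA -two_pow; rewrite -rE; ring.
have ZNX : in_Zadj z (- X) by rewrite -mulN1r; apply: in_ZadjM ZX; exact: (in_Zadj_int _ (-1)).
have NXP : - X \in P.
  rewrite -(galois_mean_Zadj h_gt0 k_odd z_prim ZNX) NXE (galois_mean_sumM _ _ z_prim); last first.
    by move=> pr /r_in [/P_Zadj].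
  apply: reduction_ideal_sum => pr /r_in [p_P r_Zz]; apply: reduction_idealM => //.
  exact: (galois_mean_Zzeta h_gt0 k_odd z_prim).
by rewrite -[X]opprK -mulrN1; apply: reduction_idealM NXP _; exact: (in_Zadj_int _ (-1)).
Qed.

End Reduction.

Theorem mainTheorem6
  (F : finFieldType) (p : nat) (hp : prime p) (hpodd : odd p)
  (hchF : p \in [pchar F])
  (alpha : F) (halpha : (#|F|.-1).-primitive_root alpha)
  (E : finFieldType) (hchE : 2 \in [pchar E])
  (beta : E) (k : nat) (hbT : beta ^+ (#|F|.-1) = 1)
  (hk : k.-primitive_root beta) (hk1 : (1 < k)%N)
  (P : pred algC) (z : algC) (hz : z ^+ k = 1)
  (hPsub : forall x, x \in P -> inZzeta k x)
  (hphi : forall g : {poly int},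
      ((map_poly intr g).[z] \in P) = root (map_poly intr g) beta)
  (h : nat) (hh1 : (1 <= h)%N) (hhu : (h <= logn 2 (#|F|.-1))%N) :
  (('X - beta%:P) ^+ (2 ^ h) %| Spoly alpha E) <->
  (forall i : 'I_(2 ^ h),
     congr_ideal h k P
       (\sum_(j < 2 ^ h)
          zeta (2 ^ h) ^- (i * j) * etaC alpha (2 ^ h) j (-1)
          * Ksum alpha (fun x => etaC alpha (2 ^ h) j x * charOf alpha z x))
       (- (2 ^ h)%:R * ((#|F|.-1)./2 %% 2 ^ h == i)%N%:R)).
Proof.
have n_dvd_T : (2 ^ h %| #|F|.-1)%N by rewrite pfactor_dvdn // (prim_order_gt0 halpha).
have T_even : ~~ odd #|F|.-1.
  by rewrite -dvdn2 (dvdn_trans _ n_dvd_T) // -{1}(expn1 2) dvdn_exp2l.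
have k_odd : odd k by apply: contraLR hchE; rewrite -dvdn2 => /(prim_root_pcharF hk) ->.
have k_dvd_T : (k %| #|F|.-1)%N by rewrite (prim_order_dvd hk) hbT.
have z_prim := reduction_prim_root hphi hk hz.
have zT : z ^+ #|F|.-1 = 1 by apply/eqP; rewrite -(prim_order_dvd z_prim).
have P_Zadj x (xP : x \in P) : in_Zadj z x := in_Zadj_zeta_prim z_prim (hPsub x xP).
have FourierE := Fourier_Ksum halpha T_even n_dvd_T (zeta_pow2_prim hh1) zT
  (prim_root_expr_half z_prim k_odd k_dvd_T T_even) (prim_root_expr_pow2_neq1 h z_prim k_odd hk1).
have ZX i : in_Zadj z (resid_sum #|F|.-1 (2 ^ h) i (slce alpha) z).
  by apply: in_Zadj_sum => m; exact: in_Zadj_exp.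
rewrite /Spoly exp2n_subr_pchar2 ?pchar_poly // -polyC_exp.
rewrite dvdp_XnsubC_poly ?expn_gt0 //; last first.
  by rewrite (prim_root_eq0 hk) -lt0n (prim_order_gt0 hk).
split => [S_dvd i|congr_S i i_lt_n].
  rewrite FourierE // -expnS (congr_ideal_reduction hphi) //.
  by rewrite (resid_sum_reduction hphi) // resid_sumE S_dvd.
move: (congr_S (Ordinal i_lt_n)); rewrite FourierE // -expnS (congr_ideal_reduction hphi) //.
by rewrite (resid_sum_reduction hphi) // resid_sumE => /eqP.
Qed.
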